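(* Let $p\in(1,\infty]$ and let $\theta_p$ be a real number with $0<\theta_p\le 1/2$ and $3((1-\theta_p)^p+2\theta_p^p)^{1/p}+(3\theta_p^p)^{1/p}<3$ (for $p=\infty$ the latter is read as $3\max(1-\theta_\infty,\theta_\infty)+\theta_\infty<3$). Define, for $p<\infty$: $\alpha_X=3^{1/p}\theta_p$, $\alpha_P=1$, $\beta_{in}=((1-\theta_p)^p+2\theta_p^p)^{1/p}$, $\beta_{out}=(1+3\theta_p^p)^{1/p}$, $\gamma_0=6^{1/p}\theta_p$, $\gamma_1=4^{1/p}\theta_p$, $\gamma_2=2^{1/p}\theta_p$, $\tau=2^{1/p}$; and for $p=\infty$: $\alpha_X=\gamma_0=\gamma_1=\gamma_2=\theta_\infty$, $\alpha_P=\beta_{out}=\tau=1$, $\beta_{in}=1-\theta_\infty$. Then the tuple $(\alpha_X,\alpha_P,\beta_{in},\beta_{out},\gamma_0,\gamma_1,\gamma_2,\tau)$ is Steiner embeddable.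
   Context: These are the $\ell_p$-distances in the point configuration with terminals $\mathbf{0}$ and the standard basis vectors $\mathbf{e}_i$, and facilities $\theta_p(\mathbf{e}_i+\mathbf{e}_j+\mathbf{e}_k)$. A tuple $(\alpha_X,\alpha_P,\beta_{in},\beta_{out},\gamma_0,\gamma_1,\gamma_2,\tau)$ of positive reals is metric compatible if: $\alpha_X\le\min(\alpha_P+\beta_{in},\alpha_P+\beta_{out})$; $\alpha_P\le\min(\alpha_X+\beta_{in},\alpha_X+\beta_{out})$; $\beta_{in}\le\min(\alpha_X+\alpha_P,\beta_{out}+\tau,\gamma_i+\beta_{out}: i\in\{0,1,2\})$; $\beta_{out}\le\min(\alpha_X+\alpha_P,\beta_{in}+\tau,\gamma_i+\beta_{in}: i\in\{0,1,2\})$; $\gamma_i\le\min(2\alpha_X,\gamma_j+\gamma_k,2\beta_{in},2\beta_{out})$ for all $i,j,k\in\{0,1,2\}$; $\tau\le\min(2\alpha_P,2\beta_{in},2\beta_{out})$. It is Steiner embeddable if it is metric compatible and: (P1) $\alpha_X\le 3\gamma_2/2,\alpha_P,\beta_{in},\beta_{out},\gamma_0,\gamma_1,\tau$; (P2) $\alpha_P\le\beta_{out}$; (P3) $\beta_{in}+\alpha_X/3<\min(\alpha_P,\tau)$; (P4) $\min(\alpha_P,\tau)\le\beta_{in}+\gamma_2$. *)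

From Stdlib Require Import Reals.
Open Scope R_scope.

Inductive exponent : Type :=
| PFin (p : R)
| PInf.

Definition exponent_gt1 (p : exponent) : Prop :=
  match p with PFin q => 1 < q | PInf => True end.

Definition metric_compatible (aX aP bin bout g0 g1 g2 t : R) : Prop :=
  0 < aX /\ 0 < aP /\ 0 < bin /\ 0 < bout /\ 0 < g0 /\ 0 < g1 /\ 0 < g2 /\ 0 < t /\
  aX <= Rmin (aP + bin) (aP + bout) /\
  aP <= Rmin (aX + bin) (aX + bout) /\
  (bin <= aX + aP /\ bin <= bout + t /\
   bin <= g0 + bout /\ bin <= g1 + bout /\ bin <= g2 + bout) /\
  (bout <= aX + aP /\ bout <= bin + t /\
   bout <= g0 + bin /\ bout <= g1 + bin /\ bout <= g2 + bin) /\
  (g0 <= 2 * aX /\ g0 <= g1 + g2 /\ g0 <= 2 * bin /\ g0 <= 2 * bout) /\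
  (g1 <= 2 * aX /\ g1 <= g0 + g2 /\ g1 <= 2 * bin /\ g1 <= 2 * bout) /\
  (g2 <= 2 * aX /\ g2 <= g0 + g1 /\ g2 <= 2 * bin /\ g2 <= 2 * bout) /\
  t <= Rmin (2 * aP) (Rmin (2 * bin) (2 * bout)).

Definition steiner_embeddable (aX aP bin bout g0 g1 g2 t : R) : Prop :=
  metric_compatible aX aP bin bout g0 g1 g2 t /\
  (aX <= 3 * g2 / 2 /\ aX <= aP /\ aX <= bin /\ aX <= bout /\
   aX <= g0 /\ aX <= g1 /\ aX <= t) /\
  aP <= bout /\
  bin + aX / 3 < Rmin aP t /\
  Rmin aP t <= bin + g2.

Definition theta_condition (p : exponent) (th : R) : Prop :=
  0 < th /\ th <= 1 / 2 /\
  match p with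
  | PFin q =>
      3 * Rpower (Rpower (1 - th) q + 2 * Rpower th q) (1 / q)
        + Rpower (3 * Rpower th q) (1 / q) < 3
  | PInf => 3 * Rmax (1 - th) th + th < 3
  end.

Definition tuple_steiner_embeddable (p : exponent) (th : R) : Prop :=
  match p with
  | PFin q =>
      steiner_embeddable
        (Rpower 3 (1 / q) * th)
        1
        (Rpower (Rpower (1 - th) q + 2 * Rpower th q) (1 / q))
        (Rpower (1 + 3 * Rpower th q) (1 / q))
        (Rpower 6 (1 / q) * th)
        (Rpower 4 (1 / q) * th)
        (Rpower 2 (1 / q) * th)
        (Rpower 2 (1 / q))
  | PInf =>
      steiner_embeddable th 1 (1 - th) 1 th th th 1
  end.

From Stdlib Require Import Reals Lra.
Open Scope R_scope.

(* Every entry of the tuple is an l^q-norm of a vector with coordinates in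
   {1, 1 - th, th}: e.g. bin = |(1 - th, th, th)|_q, bout = |(1, th, th, th)|_q
   and k^(1/q) th = |(th, ..., th)|_q with k coordinates.  The required
   inequalities therefore follow from monotonicity and subadditivity of
   t |-> t^(1/q) together with two instances of Minkowski's inequality for pairs,
   which in turn comes from convexity of t |-> t^q (Young's inequality, i.e.
   weighted AM-GM, i.e. concavity of ln).  The hypothesis on th is (P3); combined
   with aX <= bin it also gives aX < 1, i.e. 3 th^q < 1, hence bout <= tau.
   For p = oo all conditions are linear and follow from 0 < th <= 1/2. *)

Lemma exp_le_exp x y : x <= y -> exp x <= exp y.
Proof.
  intros [Hlt | ->]; [apply Rlt_le, exp_increasing; exact Hlt | apply Rle_refl].
Qed.

Lemma Rpower_gt0 x y : 0 < Rpower x y.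
Proof. apply exp_pos. Qed.

Lemma Rpower_base_1 y : Rpower 1 y = 1.
Proof. unfold Rpower; rewrite ln_1, Rmult_0_r; apply exp_0. Qed.

Lemma Rpower_Rpower_inv x a b : 0 < x -> a * b = 1 -> Rpower (Rpower x a) b = x.
Proof. intros Hx Hab; rewrite Rpower_mult, Hab; apply Rpower_1, Hx. Qed.

Lemma Rpower_div x y z : 0 < x -> 0 < y -> Rpower (x / y) z = Rpower x z / Rpower y z.
Proof.
  intros Hx Hy; unfold Rdiv.
  rewrite <- Rpower_mult_distr by (try apply Rinv_0_lt_compat; assumption).
  unfold Rpower at 2; rewrite ln_Rinv, <- Ropp_mult_distr_r, exp_Ropp by exact Hy.
  reflexivity.
Qed.

Lemma recip_in_unit q : 1 <= q -> 0 < 1 / q <= 1.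
Proof.
  intros Hq; unfold Rdiv; rewrite Rmult_1_l; split.
  - apply Rinv_0_lt_compat; lra.
  - rewrite <- Rinv_1; apply Rinv_le_contravar; lra.
Qed.

Lemma Rpower_between k s : 1 <= k -> 0 <= s <= 1 -> 1 <= Rpower k s <= k.
Proof.
  intros Hk [Hs0 Hs1]; split.
  - rewrite <- (Rpower_O k) by lra; apply Rle_Rpower; assumption.
  - rewrite <- (Rpower_1 k) at 2 by lra; apply Rle_Rpower; assumption.
Qed.

Lemma Rpower_mul_pred z q : 0 < z -> z * Rpower z (q - 1) = Rpower z q.
Proof.
  intros Hz; rewrite <- (Rpower_1 z) at 1 by exact Hz.
  rewrite <- Rpower_plus; f_equal; ring.
Qed.

Lemma Rpower_superadditive q x y : 1 <= q -> 0 < x -> 0 < y ->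
  Rpower x q + Rpower y q <= Rpower (x + y) q.
Proof.
  intros Hq Hx Hy.
  rewrite <- !(Rpower_mul_pred _ q) by lra.
  assert (Rpower x (q - 1) <= Rpower (x + y) (q - 1)) by (apply Rle_Rpower_l; lra).
  assert (Rpower y (q - 1) <= Rpower (x + y) (q - 1)) by (apply Rle_Rpower_l; lra).
  nra.
Qed.

Lemma Rpower_subadditive s x y : 0 < s <= 1 -> 0 < x -> 0 < y ->
  Rpower (x + y) s <= Rpower x s + Rpower y s.
Proof.
  intros Hs Hx Hy.
  assert (Hinv : s * / s = 1) by (field; lra).
  pose proof (Rpower_superadditive (/ s) (Rpower x s) (Rpower y s)) as Hsup.
  rewrite !Rpower_Rpower_inv in Hsup by assumption.
  rewrite <- (Rpower_Rpower_inv (Rpower x s + Rpower y s) (/ s) s).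
  - apply Rle_Rpower_l; [lra | split; [lra |]].
    apply Hsup; [| apply Rpower_gt0 ..].
    rewrite <- Rinv_1; apply Rinv_le_contravar; lra.
  - pose proof (Rpower_gt0 x s); pose proof (Rpower_gt0 y s); lra.
  - rewrite Rmult_comm; exact Hinv.
Qed.

Lemma ln_le_tangent m z : 0 < m -> 0 < z -> ln z <= ln m + z / m - 1.
Proof.
  intros Hm Hz.
  pose proof (exp_ineq1_le (ln z - ln m)) as Htan.
  unfold Rminus in Htan; rewrite exp_plus, exp_Ropp, !exp_ln in Htan by assumption.
  unfold Rdiv; lra.
Qed.

Lemma Rpower_weighted_am_gm l x y : 0 <= l <= 1 -> 0 < x -> 0 < y ->
  Rpower x l * Rpower y (1 - l) <= l * x + (1 - l) * y.
Proof.
  intros Hl Hx Hy.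
  remember (l * x + (1 - l) * y) as m eqn:Hmdef.
  assert (Hm : 0 < m) by (subst m; nra).
  assert (Hlog : l * ln x + (1 - l) * ln y <= ln m).
  { apply Rle_trans with (l * (ln m + x / m - 1) + (1 - l) * (ln m + y / m - 1)).
    - apply Rplus_le_compat; apply Rmult_le_compat_l; try lra; apply ln_le_tangent; lra.
    - replace (l * (ln m + x / m - 1) + (1 - l) * (ln m + y / m - 1))
        with (ln m + (l * x + (1 - l) * y) / m - 1) by (field; lra).
      rewrite <- Hmdef; unfold Rdiv; rewrite Rinv_r by lra; lra. }
  unfold Rpower; rewrite <- exp_plus, <- (exp_ln m Hm).
  apply exp_le_exp; lra.
Qed.

Lemma Rpower_young q x m : 1 <= q -> 0 < x -> 0 < m ->
  x * Rpower m (q - 1) <= Rpower x q / q + (1 - 1 / q) * Rpower m q.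
Proof.
  intros Hq Hx Hm.
  pose proof (recip_in_unit q Hq) as Hr.
  pose proof (Rpower_weighted_am_gm (1 / q) (Rpower x q) (Rpower m q)) as Hamgm.
  rewrite Rpower_Rpower_inv, Rpower_mult in Hamgm by (try field; lra).
  replace (q * (1 - 1 / q)) with (q - 1) in Hamgm by (field; lra).
  replace (Rpower x q / q) with (1 / q * Rpower x q) by (field; lra).
  apply Hamgm; [lra | apply Rpower_gt0 ..].
Qed.

Lemma Rpower_convex q l x y : 1 <= q -> 0 <= l <= 1 -> 0 < x -> 0 < y ->
  Rpower (l * x + (1 - l) * y) q <= l * Rpower x q + (1 - l) * Rpower y q.
Proof.
  intros Hq Hl Hx Hy.
  set (m := l * x + (1 - l) * y).
  assert (Hm : 0 < m) by (unfold m; nra).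
  set (k := Rpower m (q - 1)).
  assert (Hmk : m * k = Rpower m q) by (apply Rpower_mul_pred, Hm).
  pose proof (Rpower_young q x m Hq Hx Hm) as Hyx.
  pose proof (Rpower_young q y m Hq Hy Hm) as Hyy.
  fold k in Hyx, Hyy.
  assert (Hcomb : l * (x * k) + (1 - l) * (y * k)
      <= l * (Rpower x q / q + (1 - 1 / q) * Rpower m q)
         + (1 - l) * (Rpower y q / q + (1 - 1 / q) * Rpower m q))
    by (apply Rplus_le_compat; apply Rmult_le_compat_l; lra).
  replace (l * (x * k) + (1 - l) * (y * k)) with (Rpower m q) in Hcomb
    by (rewrite <- Hmk; unfold m; ring).
  apply (Rmult_le_reg_r (/ q)); [apply Rinv_0_lt_compat; lra |].
  unfold Rdiv in Hcomb; lra.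
Qed.

Definition pnorm2 (q a b : R) : R := Rpower (Rpower a q + Rpower b q) (1 / q).

Lemma pnorm2_pow q a b : q <> 0 -> Rpower (pnorm2 q a b) q = Rpower a q + Rpower b q.
Proof.
  intros Hq; apply Rpower_Rpower_inv; [| field; exact Hq].
  pose proof (Rpower_gt0 a q); pose proof (Rpower_gt0 b q); lra.
Qed.

Lemma pnorm2_triangle q a b c d : 1 <= q -> 0 < a -> 0 < b -> 0 < c -> 0 < d ->
  pnorm2 q (a + c) (b + d) <= pnorm2 q a b + pnorm2 q c d.
Proof.
  intros Hq Ha Hb Hc Hd.
  set (X := pnorm2 q a b); set (Y := pnorm2 q c d); set (S := X + Y).
  assert (HX : 0 < X) by apply Rpower_gt0.
  assert (HY : 0 < Y) by apply Rpower_gt0.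
  set (l := X / S).
  assert (Hl : 0 < l < 1).
  { unfold l, S; split; [apply Rdiv_lt_0_compat; lra |].
    apply Rmult_lt_reg_r with (X + Y); [lra |]; field_simplify; lra. }
  (* (u + v) / S is the convex combination of u / X and v / Y with weights X / S, Y / S *)
  assert (Hcoord : forall u v, 0 < u -> 0 < v -> Rpower (u + v) q
      <= Rpower S q * (l * (Rpower u q / Rpower X q) + (1 - l) * (Rpower v q / Rpower Y q))).
  { intros u v Hu Hv.
    replace (u + v) with (S * (l * (u / X) + (1 - l) * (v / Y))) by (unfold l, S; field; lra).
    assert (0 < u / X) by (apply Rdiv_lt_0_compat; lra).
    assert (0 < v / Y) by (apply Rdiv_lt_0_compat; lra).
    rewrite <- Rpower_mult_distr, <- !Rpower_div by (unfold S; nra).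
    apply Rmult_le_compat_l; [apply Rlt_le, Rpower_gt0 | apply Rpower_convex; lra]. }
  assert (Hsum : Rpower (a + c) q + Rpower (b + d) q <= Rpower S q).
  { pose proof (Hcoord a c Ha Hc); pose proof (Hcoord b d Hb Hd).
    assert (HXq : Rpower X q = Rpower a q + Rpower b q) by (apply pnorm2_pow; lra).
    assert (HYq : Rpower Y q = Rpower c q + Rpower d q) by (apply pnorm2_pow; lra).
    pose proof (Rpower_gt0 X q); pose proof (Rpower_gt0 Y q).
    replace (Rpower S q) with (Rpower S q * (l * (Rpower X q / Rpower X q)
      + (1 - l) * (Rpower Y q / Rpower Y q))) by (field; lra).
    rewrite HXq at 1; rewrite HYq at 1; unfold Rdiv in *; lra. }
  rewrite <- (Rpower_Rpower_inv S q (1 / q)) by (unfold S; try field; lra).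
  apply Rle_Rpower_l; [pose proof (recip_in_unit q Hq); lra |].
  pose proof (Rpower_gt0 (a + c) q); pose proof (Rpower_gt0 (b + d) q); lra.
Qed.

Lemma Rpower_root_scale q k x : q <> 0 -> 0 < k -> 0 < x ->
  Rpower k (1 / q) * x = Rpower (k * Rpower x q) (1 / q).
Proof.
  intros Hq Hk Hx.
  rewrite <- Rpower_mult_distr, Rpower_Rpower_inv by (try field; try apply Rpower_gt0; assumption).
  reflexivity.
Qed.

Section FiniteExponent.

Variables q th : R.
Hypothesis q_gt1 : 1 < q.
Hypothesis th_gt0 : 0 < th.
Hypothesis th_le_half : th <= 1 / 2.

Local Notation r := (1 / q).
Local Notation a := (Rpower th q).
Local Notation g k := (Rpower k r * th).
Local Notation aX := (g 3).
Local Notation g0 := (g 6).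
Local Notation g1 := (g 4).
Local Notation g2 := (g 2).
Local Notation bin := (Rpower (Rpower (1 - th) q + 2 * a) r).
Local Notation bout := (Rpower (1 + 3 * a) r).
Local Notation tau := (Rpower 2 r).

Let r_unit : 0 < r <= 1.
Proof. apply recip_in_unit; lra. Qed.

Let a_gt0 : 0 < a.
Proof. apply Rpower_gt0. Qed.

Let root_le x y : 0 < x <= y -> Rpower x r <= Rpower y r.
Proof. apply Rle_Rpower_l; lra. Qed.

Let root_pow x : 0 < x -> Rpower (Rpower x q) r = x.
Proof. intros Hx; apply Rpower_Rpower_inv; [exact Hx | field; lra]. Qed.

Let g_scale k : 0 < k -> g k = Rpower (k * a) r.
Proof. intros Hk; apply Rpower_root_scale; lra. Qed.

Let g_pow k : 0 < k -> Rpower (g k) q = k * a.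
Proof.
  intros Hk; rewrite g_scale by exact Hk.
  apply Rpower_Rpower_inv; [nra | field; lra].
Qed.

Lemma tau_bounds : 1 <= tau <= 2.
Proof. apply Rpower_between; lra. Qed.

Lemma gammas_ordered : th <= g2 <= aX /\ aX <= g1 <= g0.
Proof.
  pose proof (Rpower_between 2 r ltac:(lra) ltac:(lra)).
  repeat split; try (apply Rmult_le_compat_r; [lra | apply root_le; lra]).
  rewrite <- (Rmult_1_l th) at 1; apply Rmult_le_compat_r; lra.
Qed.

Lemma gamma0_subadditive : g0 <= g1 + g2 /\ g0 <= 2 * aX.
Proof.
  rewrite <- Rmult_plus_distr_r, <- Rmult_assoc, <- Rplus_diag.
  split; apply Rmult_le_compat_r; try lra;
    [replace 6 with (4 + 2) by lra | replace 6 with (3 + 3) by lra];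
    apply Rpower_subadditive; lra.
Qed.

Lemma aX_le_gamma2 : aX <= 3 * g2 / 2.
Proof.
  replace 3 with (3 / 2 * 2) at 1 by lra.
  rewrite <- Rpower_mult_distr, Rmult_assoc by lra.
  replace (3 * (Rpower 2 r * th) / 2) with (3 / 2 * (Rpower 2 r * th)) by field.
  apply Rmult_le_compat_r.
  - pose proof (Rpower_gt0 2 r); nra.
  - apply Rpower_between; lra.
Qed.

Lemma compl_th_le_bin : 1 - th <= bin.
Proof.
  rewrite <- (root_pow (1 - th)) at 1 by lra.
  apply root_le; split; [apply Rpower_gt0 | lra].
Qed.

Lemma aX_le_bin : aX <= bin.
Proof.
  rewrite g_scale by lra; apply root_le; split; [lra |].
  assert (a <= Rpower (1 - th) q) by (apply Rle_Rpower_l; lra).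
  lra.
Qed.

Lemma bout_ge1 : 1 <= bout.
Proof. rewrite <- (Rpower_base_1 r) at 1; apply root_le; lra. Qed.

Lemma bout_le_aX_add1 : bout <= aX + 1.
Proof.
  pose proof (Rpower_subadditive r 1 (3 * a)) as Hsub.
  rewrite Rpower_base_1 in Hsub; rewrite g_scale; lra.
Qed.

Lemma bout_le_bin_gamma2 : bout <= bin + g2.
Proof.
  assert (Hg2 : 0 < g2) by (apply Rmult_lt_0_compat; [apply Rpower_gt0 | lra]).
  pose proof (pnorm2_triangle q (1 - th) g2 th th) as Hmink.
  unfold pnorm2 in Hmink.
  replace (1 - th + th) with 1 in Hmink by ring.
  rewrite g_pow, Rplus_diag, <- g_scale, Rpower_base_1 in Hmink by lra.
  apply Rle_trans with (2 := Hmink ltac:(lra) ltac:(lra) Hg2 th_gt0 th_gt0).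
  apply root_le; split; [lra |].
  pose proof (Rpower_superadditive q g2 th ltac:(lra) Hg2 th_gt0).
  rewrite g_pow in * by lra; lra.
Qed.

Lemma tau_le_2bin : tau <= 2 * bin.
Proof.
  pose proof (pnorm2_triangle q (1 - th) th th (1 - th)) as Hmink.
  unfold pnorm2 in Hmink.
  replace (1 - th + th) with 1 in Hmink by ring.
  rewrite Rplus_minus, Rpower_base_1, (Rplus_comm a) in Hmink.
  replace (1 + 1) with 2 in Hmink by ring.
  rewrite Rplus_diag in Hmink.
  apply Rle_trans with (1 := Hmink ltac:(lra) ltac:(lra) th_gt0 th_gt0 ltac:(lra)).
  apply Rmult_le_compat_l; [lra |].
  apply root_le; split; [pose proof (Rpower_gt0 (1 - th) q); lra | lra].
Qed.

Hypothesis theta_bound : 3 * bin + Rpower (3 * a) r < 3.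

Lemma aX_lt1 : aX < 1.
Proof. pose proof aX_le_bin; rewrite g_scale in * by lra; lra. Qed.

Lemma bout_le_tau : bout <= tau.
Proof.
  apply root_le; split; [lra |].
  assert (Hroot : Rpower (3 * a) r < 1) by (rewrite <- g_scale by lra; exact aX_lt1).
  rewrite <- (Rpower_Rpower_inv (3 * a) r q) by (try field; lra).
  assert (Rpower (Rpower (3 * a) r) q <= Rpower 1 q).
  { apply Rle_Rpower_l; [lra | split; [apply Rpower_gt0 | lra]]. }
  rewrite Rpower_base_1 in *.
  lra.
Qed.

Lemma finite_exponent_embeddable : tuple_steiner_embeddable (PFin q) th.
Proof.
  pose proof tau_bounds; pose proof gammas_ordered; pose proof gamma0_subadditive.
  pose proof aX_le_gamma2; pose proof compl_th_le_bin; pose proof aX_le_bin; pose proof aX_lt1.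
  pose proof bout_ge1; pose proof bout_le_aX_add1; pose proof bout_le_tau.
  pose proof bout_le_bin_gamma2; pose proof tau_le_2bin.
  pose proof theta_bound as Hbound; rewrite <- g_scale in Hbound by lra.
  unfold tuple_steiner_embeddable, steiner_embeddable, metric_compatible, Rmin.
  repeat split; repeat destruct Rle_dec; lra.
Qed.

End FiniteExponent.

Lemma infinite_exponent_embeddable th : 0 < th -> th <= 1 / 2 ->
  tuple_steiner_embeddable PInf th.
Proof.
  intros Hth0 Hth1.
  unfold tuple_steiner_embeddable, steiner_embeddable, metric_compatible, Rmin.
  repeat split; repeat destruct Rle_dec; lra.
Qed.

Theorem proposition5p2 (p : exponent) (th : R) :
  exponent_gt1 p -> theta_condition p th -> tuple_steiner_embeddable p th.
Proof.
  destruct p as [q |]; intros Hp [Hth0 [Hth1 Hbound]].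
  - exact (finite_exponent_embeddable q th Hp Hth0 Hth1 Hbound).
  - exact (infinite_exponent_embeddable th Hth0 Hth1).
Qed.
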